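(* Let $q=5^m$ with $m$ even, let $\alpha\in\mathbb{F}_q$ be a non-square, and let $Z\in\mathbb{F}_{q^2}\setminus\mathbb{F}_q$ satisfy $Z^2=\alpha$. Let $f(x)=x^{q+2}$ on $\mathbb{F}_{q^2}$ and for $b\in\mathbb{F}_{q^2}$ put $\beta(b)=\beta_f(1,\tfrac14 b)$. Then for every $d\in\mathbb{F}_q^*$: $\beta(2dZ)=3$ if $d^2\alpha+2\in C_0$, and $\beta(2dZ)\in\{0,3\}$ if $d^2\alpha+2\in C_1$.
   Context: $\beta_f(a,b)$ is the number of $(x,y)\in\mathbb{F}_{q^2}^2$ with $f(x)-f(y)=b$ and $f(x+a)-f(y+a)=b$. $C_0$ (resp. $C_1$) denotes the set of nonzero squares (resp. non-squares) in $\mathbb{F}_q^*$. *)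

From HB Require Import structures.
From mathcomp Require Import all_boot all_order all_algebra all_field.
Set Implicit Arguments. Unset Strict Implicit. Unset Printing Implicit Defensive.
Import Order.TTheory GRing.Theory Num.Theory.
Local Open Scope ring_scope.

(* L plays the role of F_{q^2}; F_q is the subfield {x | x^q = x}. *)
Definition inFq (L : finFieldType) (q : nat) (x : L) : bool := x ^+ q == x.

Definition sqFq (L : finFieldType) (q : nat) (x : L) : Prop :=
  exists y : L, inFq q y /\ y ^+ 2 = x.

Definition C0 (L : finFieldType) (q : nat) (x : L) : Prop :=
  inFq q x /\ x != 0 /\ sqFq q x.
Definition C1 (L : finFieldType) (q : nat) (x : L) : Prop :=
  inFq q x /\ x != 0 /\ ~ sqFq q x.

Definition fpow (L : finFieldType) (q : nat) (x : L) : L := x ^+ (q + 2).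

Definition beta_f (L : finFieldType) (f : L -> L) (a b : L) : nat :=
  #|[set p : L * L | (f p.1 - f p.2 == b) && (f (p.1 + a) - f (p.2 + a) == b)]|.

Definition beta (L : finFieldType) (q : nat) (b : L) : nat :=
  beta_f (@fpow L q) 1 (b / 4%:R).

From HB Require Import structures.
From mathcomp Require Import all_boot all_order all_algebra all_field all_solvable.
From mathcomp Require Import ring zify.
Import Order.TTheory GRing.Theory Num.Theory.

Set Implicit Arguments.
Unset Strict Implicit.
Unset Printing Implicit Defensive.

Local Open Scope ring_scope.

(* Put c := 2dZ/4, x = X - 3 and y = Y - 3; in characteristic 5, x + 1 = X + 3.
   Subtracting the two equations of beta gives 2 X X^q + X^2 = 2 Y Y^q + Y^2,
   which forces X^2 = Y^2 because 2 is a square and alpha a non-square in F_q;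
   as c <> 0 this leaves Y = -X, so beta counts the X with
   f(X - 3) + f(X + 3) = c.  Writing X = u + vZ over F_q, these are the X with
   u = 0 and alpha v^3 + v = d, and those with v = 2d and u^2 = -(d^2 alpha + 2);
   the latter are 2 or 0 according as d^2 alpha + 2 lies in C_0 or C_1.  A root
   v0 in F_q of the cubic leaves a quadratic whose discriminant D satisfies
   D (3 alpha v0^2 + 1)^2 = 3 alpha (d^2 alpha + 2).  Since 3 is a square, the
   cubic has exactly one root in F_q for d^2 alpha + 2 in C_0 (one exists by
   Cardano's formula, using a cube root in F_{q^2}), and none or three for
   d^2 alpha + 2 in C_1. *)

Section FiniteField.
Variable F : finFieldType.

Lemma card_finField_pred_gt0 : (0 < #|F|.-1)%N.
Proof. by rewrite -subn1 subn_gt0 finNzRing_gt1. Qed.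

Lemma expf_card_pred (x : F) : x != 0 -> x ^+ #|F|.-1 = 1.
Proof.
move=> x0; apply: (mulfI x0); rewrite mulr1 -exprS prednK ?expf_card //.
exact: ltnW (finNzRing_gt1 F).
Qed.

Lemma finField_prim_root : exists g : F, (#|F|.-1).-primitive_root g.
Proof.
have : has (#|F|.-1).-primitive_root (enum [set~ (0 : F)]).
  apply: has_prim_root; first exact: card_finField_pred_gt0.
  - by apply/allP => x; rewrite mem_enum !inE unity_rootE => x0; rewrite expf_card_pred.
  - exact: enum_uniq.
  - by rewrite -cardE cardsC1.
by case/hasP => g _; exists g.
Qed.

Lemma finField_exists_root (e : nat) (w : F) : (e %| #|F|.-1)%N -> w != 0 ->
  w ^+ (#|F|.-1 %/ e) = 1 -> exists s, s ^+ e = w.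
Proof.
move=> e_dvd w0 w1; have [g g_prim] := finField_prim_root.
have [[i _] /= w_def] := prim_rootP g_prim (@expf_card_pred w w0).
have e_gt0 := dvdn_gt0 card_finField_pred_gt0 e_dvd.
have ne_gt0 : (0 < #|F|.-1 %/ e)%N by rewrite divn_gt0 // dvdn_leq ?card_finField_pred_gt0.
move/eqP: w1; rewrite w_def -exprM -(expr0 g) (eq_prim_root_expr g_prim) mod0n => n_dvd.
have : (e * (#|F|.-1 %/ e) %| i * (#|F|.-1 %/ e))%N by rewrite mulnC divnK.
rewrite dvdn_pmul2r // => /divnK i_def.
by exists (g ^+ (i %/ e)); rewrite -exprM i_def.
Qed.

End FiniteField.

Section FrobeniusFq.
Variables (L : finFieldType) (q : nat).
Hypothesis q_pchar : [pchar L].-nat q.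

Lemma frobD (x y : L) : (x + y) ^+ q = x ^+ q + y ^+ q.
Proof. exact: exprDn_pchar. Qed.

Lemma frobN (x : L) : (- x) ^+ q = - x ^+ q.
Proof. exact: exprNn_pchar. Qed.

Lemma frobB (x y : L) : (x - y) ^+ q = x ^+ q - y ^+ q.
Proof. by rewrite frobD frobN. Qed.

Lemma frob_nat k : (k%:R : L) ^+ q = k%:R.
Proof.
elim: k => [|k IHk]; last by rewrite mulrS frobD IHk expr1n.
by rewrite expr0n gtn_eqF //; case/andP: q_pchar.
Qed.

Lemma inFqP (x : L) : reflect (x ^+ q = x) (inFq q x).
Proof. exact: eqP. Qed.

Lemma inFq_nat k : inFq q (k%:R : L).
Proof. exact/inFqP/frob_nat. Qed.

Lemma inFq0 : inFq q (0 : L).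
Proof. exact: (inFq_nat 0). Qed.

Lemma inFq1 : inFq q (1 : L).
Proof. exact: (inFq_nat 1). Qed.

Lemma inFqD (x y : L) : inFq q x -> inFq q y -> inFq q (x + y).
Proof. by move=> /inFqP x_q /inFqP y_q; apply/inFqP; rewrite frobD x_q y_q. Qed.

Lemma inFqN (x : L) : inFq q x -> inFq q (- x).
Proof. by move=> /inFqP x_q; apply/inFqP; rewrite frobN x_q. Qed.

Lemma inFqM (x y : L) : inFq q x -> inFq q y -> inFq q (x * y).
Proof. by move=> /inFqP x_q /inFqP y_q; apply/inFqP; rewrite exprMn x_q y_q. Qed.

Lemma inFqV (x : L) : inFq q x -> inFq q x^-1.
Proof. by move=> /inFqP x_q; apply/inFqP; rewrite exprVn x_q. Qed.

Lemma inFqX (x : L) k : inFq q x -> inFq q (x ^+ k).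
Proof. by move=> /inFqP x_q; apply/inFqP; rewrite exprAC x_q. Qed.

End FrobeniusFq.

#[export] Hint Resolve inFq0 inFq1 inFq_nat inFqD inFqN inFqM inFqV inFqX : core.

Section QuadraticExtension.
Variables (L : finFieldType) (q : nat).
Hypotheses (q_pchar : [pchar L].-nat q) (card_L : #|L| = (q ^ 2)%N) (q_odd : odd q).

Lemma pchar_two_neq0 : (2%:R : L) != 0.
Proof.
apply/negP => two0; have two_pchar : 2 \in [pchar L] by apply/andP.
move: q_pchar; rewrite (eq_pnat _ (pcharf_eq two_pchar)) => /p_natP[k q_def].
by move: q_odd (finNzRing_gt1 L); rewrite card_L q_def oddX; case: k {q_def}.
Qed.

Lemma frobK (x : L) : (x ^+ q) ^+ q = x.
Proof. by rewrite -exprM mulnn -card_L expf_card. Qed.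

Lemma inFq_frob (x : L) : inFq q (x + x ^+ q).
Proof. by apply/inFqP; rewrite frobD // frobK addrC. Qed.

Lemma inFq_expr_pred (a : L) : inFq q a -> a != 0 -> a ^+ q.-1 = 1.
Proof.
move=> /inFqP a_q a0; apply: (mulfI a0); rewrite mulr1 -exprS prednK //.
by case/andP: q_pchar.
Qed.

Lemma card_L_pred : (#|L|.-1 = q.-1 * q.+1)%N.
Proof. by rewrite card_L; have := odd_gt0 q_odd; nia. Qed.

Lemma q_pred_half : (q.-1 = 2 * (q.-1 %/ 2))%N.
Proof. by rewrite mulnC divnK // dvdn2 -subn1 oddB ?odd_gt0 // q_odd. Qed.

Lemma sqFq_expr_half (a : L) : inFq q a -> a != 0 ->
  a ^+ (q.-1 %/ 2) = 1 -> sqFq q a.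
Proof.
move=> a_q a0 a_half.
have [||s s_sqr] := @finField_exists_root L 2 a _ a0.
- by rewrite card_L_pred dvdn_mulr // {1}q_pred_half dvdn_mulr.
- by rewrite card_L_pred {1}q_pred_half -mulnA mulKn // exprM a_half expr1n.
exists s; split=> //; apply/inFqP.
have s0 : s != 0 by apply: contraNneq a0 => s0; rewrite -s_sqr s0 expr0n.
by rewrite -(prednK (odd_gt0 q_odd)) exprS {1}q_pred_half exprM s_sqr a_half mulr1.
Qed.

Lemma nonsqFq_expr_half (a : L) : inFq q a -> a != 0 -> ~ sqFq q a ->
  a ^+ (q.-1 %/ 2) = -1.
Proof.
move=> a_q a0 a_nonsq.
have : (a ^+ (q.-1 %/ 2)) ^+ 2 == 1.
  by rewrite -exprM mulnC -q_pred_half inFq_expr_pred.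
rewrite sqrf_eq1 => /orP[/eqP a_half | /eqP //].
by case: a_nonsq; apply: sqFq_expr_half.
Qed.

Lemma sqFqM_nonsq (a b : L) : inFq q a -> a != 0 -> ~ sqFq q a ->
  inFq q b -> b != 0 -> ~ sqFq q b -> sqFq q (a * b).
Proof.
move=> a_q a0 a_nonsq b_q b0 b_nonsq.
apply: sqFq_expr_half; [exact: inFqM | exact: mulf_neq0 |].
by rewrite exprMn !nonsqFq_expr_half // mulrNN mulr1.
Qed.

Lemma Fq_sqr_eq_nonsq (alpha x y : L) : ~ sqFq q alpha ->
  inFq q x -> inFq q y -> x ^+ 2 = alpha * y ^+ 2 -> y = 0.
Proof.
move=> alpha_nonsq x_q y_q xy; have [// | y0] := eqVneq y 0.
case: alpha_nonsq; exists (x / y); split; first by auto.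
by rewrite expr_div_n xy mulfK ?expf_neq0.
Qed.

Definition Fq_sqrts (a : L) : {set L} := [set u | inFq q u & u ^+ 2 == a].

Lemma Fq_sqrts_sub (a : L) : {subset Fq_sqrts a <= inFq q}.
Proof. by move=> u; rewrite inE => /andP[]. Qed.

Lemma Fq_sqrts_nonsq (a : L) : ~ sqFq q a -> Fq_sqrts a = set0.
Proof.
move=> a_nonsq; apply/setP => u; rewrite !inE.
by apply/negP => /andP[u_q /eqP u_sqr]; apply: a_nonsq; exists u.
Qed.

Lemma card_Fq_sqrts_sqr (r : L) : inFq q r -> r != 0 -> #|Fq_sqrts (r ^+ 2)| = 2.
Proof.
move=> r_q r0; have -> : Fq_sqrts (r ^+ 2) = [set r; - r].
  apply/setP => u; rewrite !inE eqf_sqr.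
  apply/andP/idP => [[_ //] | u_r]; split=> //.
  by case/orP: u_r => /eqP ->; auto.
rewrite cards2 -addr_eq0 -mulr2n -(mulr_natr r) mulf_eq0.
by rewrite (negbTE r0) (negbTE pchar_two_neq0).
Qed.

Lemma card_Fq_affine_preim (a b : L) (A : {set L}) :
  inFq q a -> a != 0 -> inFq q b -> {subset A <= inFq q} ->
  #|[set v | inFq q v & a * v + b \in A]| = #|A|.
Proof.
move=> a_q a0 b_q A_q.
have affine_inj : injective (fun v => a * v + b) by move=> v w /addIr /(mulfI a0).
rewrite -(card_imset _ affine_inj); apply: eq_card => y.
apply/imsetP/idP => [[v] | Ay]; first by rewrite inE => /andP[_ Av] ->.
have y_q := A_q y Ay.
exists ((y - b) / a); last by rewrite [a * _]mulrC divfK ?subrK.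
by rewrite inE [a * _]mulrC divfK // subrK Ay andbT; auto.
Qed.

(* An arbitrary cube root s0 of w is corrected by the cube root of unity
   s0 s0^q / k, which lies in F_q. *)
Lemma exists_normed_cube_root (w k : L) : (3 %| q.-1)%N ->
  inFq q k -> k != 0 -> w * w ^+ q = k ^+ 3 -> exists s, s ^+ 3 = w /\ s * s ^+ q = k.
Proof.
move=> three_dvd k_q k0 w_norm; have /inFqP k_frob := k_q.
have w0 : w != 0 by apply: contra_neq (expf_neq0 3 k0); rewrite -w_norm => ->; rewrite mul0r.
have [||s0 s0_cube] := @finField_exists_root L 3 w _ w0.
- by rewrite card_L_pred dvdn_mulr.
- rewrite card_L_pred mulnC -muln_divA // exprM exprSr mulrC w_norm -exprM.
  by rewrite mulnC divnK // inFq_expr_pred.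
pose rho := s0 * s0 ^+ q / k.
have rho_q : rho ^+ q = rho.
  by rewrite !exprMn exprVn frobK k_frob [s0 ^+ q * _]mulrC.
have rho_cube : rho ^+ 3 = 1.
  by rewrite !exprMn exprVn exprAC s0_cube w_norm mulfV ?expf_neq0.
exists (s0 * rho); split; first by rewrite exprMn s0_cube rho_cube mulr1.
have s0_norm : s0 * s0 ^+ q = rho * k by rewrite divfK.
rewrite exprMn rho_q mulrACA s0_norm.
by transitivity (k * rho ^+ 3); [ring | rewrite rho_cube mulr1].
Qed.

Section Coordinates.
Variable Z : L.
Hypotheses (Z_notin_Fq : ~~ inFq q Z) (Z_sqr_Fq : inFq q (Z ^+ 2)).

Lemma Z_neq0 : Z != 0.
Proof. by apply: contraNneq Z_notin_Fq => ->; apply: inFq0. Qed.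

Lemma frobZ : Z ^+ q = - Z.
Proof.
have Z_sqr_frob : (Z ^+ 2) ^+ q = Z ^+ 2 by apply/inFqP.
have : (Z ^+ q - Z) * (Z ^+ q + Z) == 0 by rewrite -subr_sqr exprAC Z_sqr_frob subrr.
rewrite mulf_eq0 subr_eq0 addr_eq0 => /orP[Z_q | /eqP //].
by case/negP: Z_notin_Fq.
Qed.

Lemma frob_coord (u v : L) : inFq q u -> inFq q v -> (u + v * Z) ^+ q = u - v * Z.
Proof.
by move=> /inFqP u_q /inFqP v_q; rewrite frobD // exprMn u_q v_q frobZ mulrN.
Qed.

Lemma Fq_coord_eq0 (u v : L) : inFq q u -> inFq q v ->
  u + v * Z = 0 -> u = 0 /\ v = 0.
Proof.
move=> u_q v_q uvZ; suff v0 : v = 0 by move: uvZ; rewrite v0 mul0r addr0.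
apply/eqP; apply: contraNT Z_notin_Fq => v0.
have vZ : v * Z = - u by rewrite -[v * Z](addKr u) uvZ addr0.
by rewrite (_ : Z = - u / v); auto; rewrite -vZ [v * Z]mulrC mulfK.
Qed.

Lemma eq_Fq_coord (u v u' v' : L) : inFq q u -> inFq q v -> inFq q u' -> inFq q v' ->
  (u + v * Z == u' + v' * Z) = (u == u') && (v == v').
Proof.
move=> u_q v_q u'_q v'_q; apply/eqP/andP => [uv_eq | [/eqP-> /eqP->] //].
have [] : u - u' = 0 /\ v - v' = 0.
  by apply: Fq_coord_eq0; auto; rewrite mulrBl addrACA -opprD uv_eq subrr.
by move=> /eqP; rewrite subr_eq0 => -> /eqP; rewrite subr_eq0.
Qed.

Lemma Fq_coordP (X : L) : exists u v, [/\ inFq q u, inFq q v & X = u + v * Z].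
Proof.
exists ((X + X ^+ q) / 2%:R), ((X - X ^+ q) / (2%:R * Z)); split.
- by apply: inFqM; auto; exact: inFq_frob.
- apply/inFqP; rewrite exprMn exprVn frobB // frobK exprMn frob_nat // frobZ.
  by rewrite mulrN invrN mulrN -mulNr opprB.
- by field; rewrite Z_neq0 pchar_two_neq0.
Qed.

Lemma mem_Fq_coord_imset (A B : {set L}) (u v : L) :
  {subset A <= inFq q} -> {subset B <= inFq q} -> inFq q u -> inFq q v ->
  (u + v * Z \in [set x + y * Z | x in A, y in B]) = (u \in A) && (v \in B).
Proof.
move=> A_q B_q u_q v_q; apply/imset2P/andP => [[x y Ax By] | [Au Bv]]; last by exists u v.
have [x_q y_q] := (A_q x Ax, B_q y By).
by move/eqP; rewrite eq_Fq_coord // => /andP[/eqP-> /eqP->].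
Qed.

Lemma card_Fq_coord_imset (A B : {set L}) :
  {subset A <= inFq q} -> {subset B <= inFq q} ->
  #|[set x + y * Z | x in A, y in B]| = (#|A| * #|B|)%N.
Proof.
move=> A_q B_q; rewrite curry_imset2X card_in_imset ?cardsX //.
move=> [x y] [x' y'] /setXP[/A_q x_q /B_q y_q] /setXP[/A_q x'_q /B_q y'_q] /=.
by move/eqP; rewrite eq_Fq_coord // => /andP[/eqP-> /eqP->].
Qed.

End Coordinates.

End QuadraticExtension.

Lemma dvdn_24_pred_5_expn (m : nat) : ~~ odd m -> (24 %| (5 ^ m).-1)%N.
Proof.
move=> m_even; rewrite -(odd_double_half m) (negbTE m_even) add0n -mul2n expnM.
have : (25 ^ m./2 == 1 %[mod 24])%N by rewrite -modnXm exp1n.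
by rewrite eqn_mod_dvd ?expn_gt0 // subn1.
Qed.

Section Char5.
Variables (L : finFieldType) (m : nat).
Hypotheses (card_L : #|L| = ((5 ^ m) ^ 2)%N) (m_even : ~~ odd m).
Local Notation q := (5 ^ m)%N.

Lemma pchar5 : 5 \in [pchar L].
Proof. by apply: (@card_finPcharP _ 5 (m * 2)); rewrite // card_L expnM. Qed.

Lemma natr5 : (5%:R : L) = 0.
Proof. exact: pcharf0 pchar5. Qed.

Lemma natr5_neq0 k : ~~ (5 %| k)%N -> (k%:R : L) != 0.
Proof. by rewrite (dvdn_pcharf pchar5). Qed.

Let q_pchar : [pchar L].-nat q.
Proof. by rewrite (eq_pnat _ (pcharf_eq pchar5)) pnatX pnat_id. Qed.

Let q_odd : odd q.
Proof. by rewrite oddX orbT. Qed.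

Hint Resolve q_pchar : core.

Lemma sqFq_nat k : ~~ (5 %| k)%N -> sqFq q (k%:R : L).
Proof.
move=> k_coprime.
apply: (sqFq_expr_half q_pchar card_L q_odd); [exact: inFq_nat | exact: natr5_neq0 |].
have /dvdnP[j ->] : (4 %| q.-1 %/ 2)%N.
  rewrite -(dvdn_pmul2l (isT : (0 < 2)%N)) -(q_pred_half q_odd).
  exact: dvdn_trans (dvdn_24_pred_5_expn m_even).
have k4 : (k ^ 4 %% 5)%N = 1%N.
  rewrite -modnXm; move: k_coprime; rewrite /dvdn.
  by case: (k %% 5)%N (ltn_pmod k (isT : (0 < 5)%N)) => [|[|[|[|[|r]]]]].
by rewrite mulnC exprM -natrX -(GRing.natr_mod_pchar pchar5) k4 expr1n.
Qed.

Lemma sqrt_natr5 k : ~~ (5 %| k)%N ->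
  exists s : L, [/\ inFq q s, s != 0 & s ^+ 2 = k%:R].
Proof.
move=> k_coprime; have [s [s_q s_sqr]] := sqFq_nat k_coprime.
exists s; split=> //; apply: contra_neq (natr5_neq0 k_coprime) => s0.
by rewrite -s_sqr s0 expr0n.
Qed.

Let two_neq0 : (2%:R : L) != 0. Proof. exact: natr5_neq0. Qed.

(* [ring5 E] proves [a = b] from the ring identity [a - b = 5 * E]. *)
Ltac ring5 E := apply/eqP; rewrite -subr_eq0; apply/eqP;
  transitivity ((5%:R : L) * E); [ring | by rewrite natr5 mul0r].

Definition shift_diff (X : L) := 2%:R * X * X ^+ q + X ^+ 2.

Definition shift_sum (X : L) := X ^+ 2 * X ^+ q - X ^+ q - 2%:R * X.

Lemma fpowE (X : L) : fpow q X = X ^+ q * X ^+ 2.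
Proof. exact: exprD. Qed.

Lemma fpowN (X : L) : fpow q (- X) = - fpow q X.
Proof. by rewrite !fpowE frobN // sqrrN mulNr. Qed.

Lemma fpow_shift_sub (X : L) :
  fpow q (X + 3%:R) - fpow q (X - 3%:R) = shift_diff X + 4%:R.
Proof.
rewrite !fpowE (frobB q_pchar X) (frobD q_pchar X) frob_nat // /shift_diff.
move: (X ^+ q) => Xq; ring5 (2%:R * X * Xq + X ^+ 2 + 10%:R).
Qed.

Lemma fpow_shift_add (X : L) :
  fpow q (X - 3%:R) + fpow q (X + 3%:R) = 2%:R * shift_sum X.
Proof.
rewrite !fpowE (frobB q_pchar X) (frobD q_pchar X) frob_nat // /shift_sum.
move: (X ^+ q) => Xq; ring5 (4%:R * Xq + 8%:R * X).
Qed.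

Lemma sub3_add1 (x : L) : x - 3%:R + 1 = x + 3%:R.
Proof. ring5 (-1 : L). Qed.

Section Beta.
Variables (alpha Z : L).
Hypotheses (alpha_q : inFq q alpha) (alpha_nonsq : ~ sqFq q alpha).
Hypotheses (Z_notin_Fq : ~~ inFq q Z) (Z_sqr : Z ^+ 2 = alpha).

Let Z_sqr_Fq : inFq q (Z ^+ 2). Proof. by rewrite Z_sqr. Qed.
Hint Resolve Z_sqr_Fq : core.

Let coordP := Fq_coordP q_pchar card_L q_odd Z_notin_Fq Z_sqr_Fq.

Lemma alpha_neq0 : alpha != 0.
Proof.
by apply/eqP => alpha0; apply: alpha_nonsq; exists 0; rewrite expr0n alpha0 inFq0.
Qed.

Lemma natr_alpha_neq0 k : ~~ (5 %| k)%N -> k%:R * alpha != 0.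
Proof. by move=> k_coprime; rewrite mulf_neq0 ?natr5_neq0 ?alpha_neq0. Qed.

Lemma sqr_coord (u v : L) : (u + v * Z) ^+ 2 = (u ^+ 2 + alpha * v ^+ 2) + 2%:R * u * v * Z.
Proof. by ring: Z_sqr. Qed.

Lemma shift_diff_coord (u v : L) : inFq q u -> inFq q v ->
  shift_diff (u + v * Z) = (3%:R * u ^+ 2 - alpha * v ^+ 2) + (2%:R * u * v) * Z.
Proof. by move=> u_q v_q; rewrite /shift_diff (frob_coord q_pchar) //; ring: Z_sqr. Qed.

Lemma shift_sum_coord (u v : L) : inFq q u -> inFq q v ->
  shift_sum (u + v * Z) =
  u * (u ^+ 2 - alpha * v ^+ 2 - 3%:R) + v * (u ^+ 2 - alpha * v ^+ 2 - 1) * Z.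
Proof. by move=> u_q v_q; rewrite /shift_sum (frob_coord q_pchar) //; ring: Z_sqr. Qed.

Lemma Fq_system_cases (a b c e : L) : inFq q a -> inFq q e ->
  3%:R * a ^+ 2 - alpha * b ^+ 2 = 3%:R * c ^+ 2 - alpha * e ^+ 2 -> a * b = c * e ->
  a ^+ 2 = c ^+ 2 \/ a = 0 /\ e = 0.
Proof.
move=> a_q e_q eq_re eq_im.
have : (a ^+ 2 - c ^+ 2) * (alpha * e ^+ 2 + 3%:R * a ^+ 2) = 0.
  transitivity (a ^+ 2 * ((3%:R * a ^+ 2 - alpha * b ^+ 2) - (3%:R * c ^+ 2 - alpha * e ^+ 2))
    + alpha * (a * b - c * e) * (a * b + c * e)); first ring.
  by rewrite eq_re eq_im !subrr mulr0 mulr0 mul0r addr0.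
move/eqP; rewrite mulf_eq0 subr_eq0 addr_eq0 => /orP[/eqP | /eqP e_sqr]; first by left.
have [s [s_q s0 s_sqr]] := sqrt_natr5 (k := 2) isT.
have sa_sqr : (s * a) ^+ 2 = alpha * e ^+ 2 by rewrite exprMn s_sqr e_sqr; ring5 (a ^+ 2).
have e0 : e = 0 by apply: (Fq_sqr_eq_nonsq alpha_nonsq _ e_q sa_sqr); auto.
move/eqP: sa_sqr; rewrite e0 expr0n mulr0 sqrf_eq0 mulf_eq0 (negbTE s0) /=.
by move/eqP; right.
Qed.

Lemma Fq_system_sqr_eq (a b c e : L) : inFq q a -> inFq q b -> inFq q c -> inFq q e ->
  3%:R * a ^+ 2 - alpha * b ^+ 2 = 3%:R * c ^+ 2 - alpha * e ^+ 2 -> a * b = c * e ->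
  a ^+ 2 = c ^+ 2.
Proof.
move=> a_q b_q c_q e_q eq_re eq_im.
have [// | [a0 e0]] := Fq_system_cases a_q e_q eq_re eq_im.
have [// | [c0 b0]] := Fq_system_cases c_q b_q (esym eq_re) (esym eq_im).
by rewrite a0 c0.
Qed.

Lemma shift_diff_inj_sqr (X Y : L) : shift_diff X = shift_diff Y -> X ^+ 2 = Y ^+ 2.
Proof.
have [a [b [a_q b_q ->]]] := coordP X; have [c [e [c_q e_q ->]]] := coordP Y.
rewrite !shift_diff_coord // => /eqP; rewrite (eq_Fq_coord q_pchar) //; try by auto.
case/andP=> /eqP eq_re /eqP eq_im2.
have eq_im : a * b = c * e by apply: (mulfI two_neq0); rewrite !mulrA.
have ac := Fq_system_sqr_eq a_q b_q c_q e_q eq_re eq_im.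
move: eq_re; rewrite ac => /addrI /oppr_inj be.
by rewrite !sqr_coord ac be -(mulrA _ a) -(mulrA _ c) eq_im.
Qed.

Lemma fpow_pair_shiftE (X Y c : L) : c != 0 ->
  (fpow q (X - 3%:R) - fpow q (Y - 3%:R) == c) &&
  (fpow q (X + 3%:R) - fpow q (Y + 3%:R) == c) =
  (Y == - X) && (fpow q (X - 3%:R) + fpow q (X + 3%:R) == c).
Proof.
move=> c0; have fpow_negD : fpow q (- X - 3%:R) = - fpow q (X + 3%:R).
  by rewrite -fpowN (opprD X).
have fpow_negB : fpow q (- X + 3%:R) = - fpow q (X - 3%:R).
  by rewrite -fpowN (opprB X) (addrC 3%:R).
apply/andP/andP => [[/eqP eq_sub /eqP eq_add] | [/eqP -> /eqP eq_sum]]; last first.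
  by rewrite fpow_negD fpow_negB !opprK eq_sum addrC eq_sum.
have : shift_diff X = shift_diff Y.
  apply: (addIr 4%:R); rewrite -!fpow_shift_sub; apply/eqP; rewrite -subr_eq0; apply/eqP.
  transitivity ((fpow q (X + 3%:R) - fpow q (Y + 3%:R)) -
                (fpow q (X - 3%:R) - fpow q (Y - 3%:R))); first by ring.
  by rewrite eq_sub eq_add subrr.
move/shift_diff_inj_sqr/eqP; rewrite eqf_sqr => /orP[/eqP XY | /eqP XY].
  by move: c0; rewrite -eq_sub XY subrr eqxx.
have YX : Y = - X by rewrite XY opprK.
by rewrite -eq_sub YX fpow_negD opprK.
Qed.

Lemma beta_f_fpow_card (c : L) : c != 0 ->
  beta_f (fpow q) 1 c = #|[set X | fpow q (X - 3%:R) + fpow q (X + 3%:R) == c]|.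
Proof.
move=> c0; have shift_inj : injective (fun X : L => (X - 3%:R, - X - 3%:R)).
  by move=> X X' [/addIr].
rewrite /beta_f -(card_imset _ shift_inj); apply: eq_card => -[x y]; rewrite inE /=.
have [X ->] : exists X, x = X - 3%:R by exists (x + 3%:R); rewrite addrK.
have [Y ->] : exists Y, y = Y - 3%:R by exists (y + 3%:R); rewrite addrK.
rewrite !sub3_add1 fpow_pair_shiftE //.
apply/andP/imsetP => [[/eqP -> XT] | [X' X'T [/addIr -> /addIr ->]]].
  by exists X; rewrite ?inE.
by rewrite inE in X'T; rewrite eqxx.
Qed.

Variable d : L.
Hypothesis d_q : inFq q d.

Definition cubic_roots : {set L} := [set v | inFq q v & alpha * v ^+ 3 + v == d].

Lemma fpow_sum_eq_coord (u v : L) : inFq q u -> inFq q v ->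
  (fpow q (u + v * Z - 3%:R) + fpow q (u + v * Z + 3%:R) == 2%:R * d * Z / 4%:R) =
  (u * (u ^+ 2 - alpha * v ^+ 2 - 3%:R) == 0) &&
  (v * (u ^+ 2 - alpha * v ^+ 2 - 1) == - d).
Proof.
move=> u_q v_q; have four : (4%:R : L) = -1 by ring5 (1 : L).
have -> : 2%:R * d * Z / 4%:R = 2%:R * (0 + (- d) * Z) by rewrite four invrN1; ring.
rewrite fpow_shift_add shift_sum_coord // (inj_eq (mulfI two_neq0)).
by rewrite (eq_Fq_coord q_pchar) //; auto 10.
Qed.

Lemma fpow_sum_eq_coordE (u v : L) : inFq q u -> inFq q v ->
  (fpow q (u + v * Z - 3%:R) + fpow q (u + v * Z + 3%:R) == 2%:R * d * Z / 4%:R) =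
  if u == 0 then v \in cubic_roots
  else (v == 2%:R * d) && (u \in Fq_sqrts q (- (d ^+ 2 * alpha + 2%:R))).
Proof.
move=> u_q v_q; rewrite fpow_sum_eq_coord // !inE u_q v_q /=.
have [-> | u0] := eqVneq u 0.
  by rewrite mul0r eqxx -eqr_opp; congr (_ == _); ring.
rewrite mulf_eq0 (negbTE u0) /= subr_eq0.
apply/andP/andP => [[/eqP N3 /eqP vN] | [/eqP -> /eqP u_sqr]].
  have d_def : d = - (v * (3%:R - 1)) by rewrite -N3 vN opprK.
  have u_sqr : u ^+ 2 = alpha * v ^+ 2 + 3%:R by rewrite -N3 addrC subrK.
  by split; apply/eqP; rewrite ?u_sqr d_def; [ring5 v | ring5 (alpha * v ^+ 2 + 1)].
split; apply/eqP; rewrite u_sqr.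
  by ring5 (- (alpha * d ^+ 2) - 1).
by ring5 (- (2%:R * alpha * d ^+ 3) - d).
Qed.

Lemma card_fpow_sum_set : d ^+ 2 * alpha + 2%:R != 0 ->
  #|[set X | fpow q (X - 3%:R) + fpow q (X + 3%:R) == 2%:R * d * Z / 4%:R]| =
  (#|cubic_roots| + #|Fq_sqrts q (- (d ^+ 2 * alpha + 2%:R))|)%N.
Proof.
move=> disc0; set S := Fq_sqrts q _.
have S0 : 0 \notin S by rewrite !inE expr0n eq_sym oppr_eq0 (negbTE disc0) andbF.
have R_q : {subset cubic_roots <= inFq q} by move=> v; rewrite inE => /andP[].
have S_q : {subset S <= inFq q} := @Fq_sqrts_sub _ _ _.
have set1_q (x : L) : inFq q x -> {subset [set x] <= inFq q} by move=> x_q y /set1P ->.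
have zero_q := set1_q 0 (inFq0 q_pchar).
have d2_q : {subset [set 2%:R * d] <= inFq q} by apply: set1_q; auto.
have mem_coord A B u v := @mem_Fq_coord_imset _ _ q_pchar _ Z_notin_Fq A B u v.
have -> : [set X | fpow q (X - 3%:R) + fpow q (X + 3%:R) == 2%:R * d * Z / 4%:R] =
    [set x + y * Z | x in [set 0], y in cubic_roots] :|:
    [set x + y * Z | x in S, y in [set 2%:R * d]].
  apply/setP => X; have [u [v [u_q v_q ->]]] := coordP X.
  rewrite inE in_setU fpow_sum_eq_coordE // !mem_coord // !in_set1.
  have [-> | _] := eqVneq u 0; last by rewrite andbC.
  by rewrite (negbTE S0) orbF.
rewrite cardsU !(card_Fq_coord_imset q_pchar Z_notin_Fq) // !cards1 mul1n muln1.
rewrite (_ : _ :&: _ = set0) ?cards0 ?subn0 //; apply/setP => X.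
have [u [v [u_q v_q ->]]] := coordP X.
rewrite in_setI in_set0 !mem_coord // in_set1.
by apply/negP => /andP[/andP[/eqP-> _] /andP[]]; rewrite (negbTE S0).
Qed.

Definition cubic_disc (v0 : L) := - (3%:R * alpha ^+ 2 * v0 ^+ 2 + 4%:R * alpha).

Lemma cubic_factor (v v0 : L) :
  4%:R * alpha * (alpha * v ^+ 3 + v - (alpha * v0 ^+ 3 + v0)) =
  (v - v0) * ((2%:R * alpha * v + alpha * v0) ^+ 2 - cubic_disc v0).
Proof. by rewrite /cubic_disc; ring. Qed.

Lemma cubic_disc_mul (v0 : L) : alpha * v0 ^+ 3 + v0 = d ->
  cubic_disc v0 * (3%:R * alpha * v0 ^+ 2 + 1) ^+ 2 = 3%:R * alpha * (d ^+ 2 * alpha + 2%:R).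
Proof.
move=> <-; rewrite /cubic_disc.
ring5 (- (2%:R * alpha) - 6%:R * alpha ^+ 2 * v0 ^+ 2 - 12%:R * alpha ^+ 3 * v0 ^+ 4
       - 6%:R * alpha ^+ 4 * v0 ^+ 6).
Qed.

Lemma cubic_rootsE (v0 : L) : v0 \in cubic_roots ->
  cubic_roots = v0 |: [set v | inFq q v &
                               2%:R * alpha * v + alpha * v0 \in Fq_sqrts q (cubic_disc v0)].
Proof.
move=> v0R; have /[1!inE] /andP[v0_q /eqP v0_root] := v0R.
apply/setP => v; rewrite in_setU1; have [-> | vv0] := eqVneq v v0; first by rewrite v0R.
rewrite !inE /=; apply: andb_id2l => v_q.
have lin_q : inFq q (2%:R * alpha * v + alpha * v0) by auto 10.
have four_alpha0 := @natr_alpha_neq0 4 isT.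
rewrite lin_q /= -subr_eq0 -v0_root -[X in X == 0](mulKf four_alpha0) cubic_factor.
by rewrite !mulf_eq0 invr_eq0 (negbTE four_alpha0) subr_eq0 (negbTE vv0) subr_eq0.
Qed.

Lemma cubic_deriv_neq0 (v0 : L) : v0 \in cubic_roots -> d ^+ 2 * alpha + 2%:R != 0 ->
  3%:R * alpha * v0 ^+ 2 + 1 != 0.
Proof.
rewrite inE => /andP[_ /eqP /cubic_disc_mul disc_mul] disc0.
apply: contra_neq (mulf_neq0 (@natr_alpha_neq0 3 isT) disc0) => K0.
by rewrite -disc_mul K0 expr0n mulr0.
Qed.

Lemma card_cubic_roots (v0 : L) : v0 \in cubic_roots -> d ^+ 2 * alpha + 2%:R != 0 ->
  #|cubic_roots| = #|Fq_sqrts q (cubic_disc v0)|.+1.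
Proof.
move=> v0R disc0; have /[1!inE] /andP[v0_q _] := v0R.
rewrite {1}(cubic_rootsE v0R) cardsU1.
rewrite (card_Fq_affine_preim q_pchar) ?natr_alpha_neq0 //; try by [auto | apply: Fq_sqrts_sub].
rewrite !inE v0_q /= -subr_eq0.
have -> : (2%:R * alpha * v0 + alpha * v0) ^+ 2 - cubic_disc v0 =
          4%:R * alpha * (3%:R * alpha * v0 ^+ 2 + 1) by rewrite /cubic_disc; ring.
rewrite mulf_eq0 (negbTE (@natr_alpha_neq0 4 isT)).
by rewrite (negbTE (cubic_deriv_neq0 v0R disc0)) andbF.
Qed.

(* Cardano: if s^3 = w := 3 (d + sigma Z / alpha) / alpha and alpha s s^q = 3,
   then s + s^q is a root of the cubic lying in F_q. *)
Lemma exists_cubic_root (sigma : L) : inFq q sigma ->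
  sigma ^+ 2 = d ^+ 2 * alpha + 2%:R -> exists v0, v0 \in cubic_roots.
Proof.
move=> sigma_q sigma_sqr; have alpha0 := alpha_neq0.
pose k := 3%:R / alpha; pose w := 3%:R * d / alpha + (3%:R * sigma / alpha ^+ 2) * Z.
have w_frob : w ^+ q = 3%:R * d / alpha - (3%:R * sigma / alpha ^+ 2) * Z.
  by rewrite (frob_coord q_pchar) //; auto 10.
have w_norm : w * w ^+ q = k ^+ 3.
  rewrite w_frob /w.
  transitivity ((3%:R * d / alpha) ^+ 2 - (3%:R / alpha ^+ 2) ^+ 2 * alpha * sigma ^+ 2).
    by ring: Z_sqr.
  rewrite sigma_sqr; transitivity (- 18%:R / alpha ^+ 3); first by field.
  by rewrite expr_div_n; congr (_ / _); ring5 (-9 : L).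
have three_dvd := dvdn_trans (isT : (3 %| 24)%N) (dvdn_24_pred_5_expn m_even).
have [||s [s_cube s_norm]] :=
  exists_normed_cube_root q_pchar card_L q_odd three_dvd _ _ w_norm.
- by rewrite /k; auto.
- by rewrite /k mulf_neq0 ?invr_eq0 ?natr5_neq0.
exists (s + s ^+ q); rewrite inE (inFq_frob q_pchar card_L) /=; apply/eqP.
transitivity (alpha * (s ^+ 3 + (s ^+ q) ^+ 3) + 3%:R * alpha * (s * s ^+ q) * (s + s ^+ q)
  + (s + s ^+ q)); first by ring.
rewrite exprAC s_cube s_norm w_frob /w /k.
transitivity (d + 5%:R * (d + 2%:R * (s + s ^+ q))); first by field.
by rewrite natr5 mul0r addr0.
Qed.

Lemma card_cubic_roots_sq : C0 q (d ^+ 2 * alpha + 2%:R) -> #|cubic_roots| = 1%N.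
Proof.
case=> _ [disc0 [sigma [sigma_q sigma_sqr]]].
have [v0 v0R] := exists_cubic_root sigma_q sigma_sqr.
rewrite (card_cubic_roots v0R disc0) Fq_sqrts_nonsq ?cards0 // => -[r [r_q r_sqr]].
have /[1!inE] /andP[v0_q /eqP /cubic_disc_mul disc_mul] := v0R.
have [s [s_q s0 s_sqr]] := sqrt_natr5 (k := 3) isT.
have sqr_eq : (r * (3%:R * alpha * v0 ^+ 2 + 1)) ^+ 2 = alpha * (s * sigma) ^+ 2.
  by rewrite !exprMn r_sqr disc_mul s_sqr sigma_sqr; ring.
have /eqP : s * sigma = 0 by apply: (Fq_sqr_eq_nonsq alpha_nonsq _ _ sqr_eq); auto 10.
rewrite mulf_eq0 (negbTE s0) /= => /eqP sigma0.
by move: disc0; rewrite -sigma_sqr sigma0 expr0n eqxx.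
Qed.

Lemma card_cubic_roots_nonsq : C1 q (d ^+ 2 * alpha + 2%:R) ->
  #|cubic_roots| = 0%N \/ #|cubic_roots| = 3.
Proof.
case=> disc_q [disc0 disc_nonsq].
have [-> | [v0 v0R]] := set_0Vmem cubic_roots; [by left; rewrite cards0 | right].
have /[1!inE] /andP[v0_q /eqP /cubic_disc_mul disc_mul] := v0R.
have [t [t_q t_sqr]] := sqFqM_nonsq q_pchar card_L q_odd alpha_q alpha_neq0 alpha_nonsq
  disc_q disc0 disc_nonsq.
have [s [s_q s0 s_sqr]] := sqrt_natr5 (k := 3) isT.
have K0 := cubic_deriv_neq0 v0R disc0.
have t0 : t != 0.
  by apply: contra_neq (mulf_neq0 alpha_neq0 disc0) => t0; rewrite -t_sqr t0 expr0n.
rewrite (card_cubic_roots v0R disc0).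
have -> : cubic_disc v0 = (s * t / (3%:R * alpha * v0 ^+ 2 + 1)) ^+ 2.
  by rewrite expr_div_n exprMn s_sqr t_sqr mulrA -disc_mul mulfK ?expf_neq0.
rewrite (card_Fq_sqrts_sqr q_pchar card_L q_odd) //; first by auto 10.
by rewrite !mulf_neq0 ?invr_eq0.
Qed.

Hypothesis d_neq0 : d != 0.

Lemma beta_card : d ^+ 2 * alpha + 2%:R != 0 ->
  beta q (2%:R * d * Z) = (#|cubic_roots| + #|Fq_sqrts q (- (d ^+ 2 * alpha + 2%:R))|)%N.
Proof.
move=> disc0; rewrite /beta beta_f_fpow_card ?card_fpow_sum_set //.
have Z0 := Z_neq0 q_pchar Z_notin_Fq.
by rewrite !mulf_neq0 ?invr_eq0 ?natr5_neq0.
Qed.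

Lemma beta_sq : C0 q (d ^+ 2 * alpha + 2%:R) -> beta q (2%:R * d * Z) = 3.
Proof.
move=> disc_sq; have [_ [disc0 [sigma [sigma_q sigma_sqr]]]] := disc_sq.
have sigma0 : sigma != 0.
  by apply: contra_neq disc0 => sigma0; rewrite -sigma_sqr sigma0 expr0n.
rewrite beta_card // card_cubic_roots_sq //.
have -> : - (d ^+ 2 * alpha + 2%:R) = (2%:R * sigma) ^+ 2.
  by rewrite exprMn -sigma_sqr; ring5 (- sigma ^+ 2).
by rewrite (card_Fq_sqrts_sqr q_pchar card_L q_odd) ?mulf_neq0 //; auto.
Qed.

Lemma beta_nonsq : C1 q (d ^+ 2 * alpha + 2%:R) ->
  beta q (2%:R * d * Z) = 0%N \/ beta q (2%:R * d * Z) = 3.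
Proof.
move=> disc_nonsq; have [disc_q [disc0 disc_not_sq]] := disc_nonsq.
rewrite beta_card // Fq_sqrts_nonsq ?cards0 ?addn0; first exact: card_cubic_roots_nonsq.
case=> u [u_q u_sqr]; apply: disc_not_sq; exists (2%:R * u); split; first by auto.
by rewrite exprMn u_sqr; ring5 (- (d ^+ 2 * alpha + 2%:R)).
Qed.

End Beta.

End Char5.

Theorem lemma11 (L : finFieldType) (m : nat) (alpha Z : L) :
  ~~ odd m -> (0 < m)%N ->
  #|L| = ((5 ^ m) ^ 2)%N ->
  C1 (5 ^ m) alpha ->
  ~~ inFq (5 ^ m) Z -> Z ^+ 2 = alpha ->
  forall d : L, inFq (5 ^ m) d -> d != 0 ->
    (C0 (5 ^ m) (d ^+ 2 * alpha + 2%:R) -> beta (5 ^ m) (2%:R * d * Z) = 3%N) /\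
    (C1 (5 ^ m) (d ^+ 2 * alpha + 2%:R) ->
       beta (5 ^ m) (2%:R * d * Z) = 0%N \/ beta (5 ^ m) (2%:R * d * Z) = 3%N).
Proof.
move=> m_even _ card_L [alpha_q [_ alpha_nonsq]] Z_notin_Fq Z_sqr d d_q d0.
split; [exact: beta_sq | exact: beta_nonsq].
Qed.
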